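(* Let $\mathcal{H}$ be a finite set of hypotheses with a prior probability distribution $P$, $\mathcal{T}$ a finite set of tests, $\mathcal{O}$ a finite set of outcomes, each $h\in\mathcal{H}$ a function $h:\mathcal{T}\to\mathcal{O}$, and $\mathcal{R}$ a finite collection of decision regions $r\subseteq\mathcal{H}$ with $\bigcup_{r\in\mathcal{R}} r=\mathcal{H}$. Let $\mathcal{G}$, $k$, $\mathcal{E}$ and $f_{\mathrm{HEC}}$ be as defined in the context. Then $f_{\mathrm{HEC}}$ is strongly adaptive monotone and adaptive submodular, i.e.: (i) for every $\mathcal{S}\subseteq\mathcal{T}\times\mathcal{O}$, every $t\in\mathcal{T}$ and every $h\in\mathcal{H}$, $f_{\mathrm{HEC}}(\mathcal{S}\cup\{(t,h(t))\})-f_{\mathrm{HEC}}(\mathcal{S})\ge 0$; (ii) for all $\mathcal{S}\subseteq\mathcal{S}'\subseteq\mathcal{T}\times\mathcal{O}$ with $P(\mathcal{V}(\mathcal{S}'))>0$ and every test $t\in\mathcal{T}$, $\Delta(t\mid\mathcal{S})\ge\Delta(t\mid\mathcal{S}')$.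
   Context: Subregions: hypotheses are grouped into the same subregion iff they belong to exactly the same decision regions; $\mathcal{G}$ is the set of these classes, and $g\subseteq r$ means every hypothesis of $g$ lies in $r$. Set $k=\min\big(\max_{h\in\mathcal{H}}|\{r: h\in r\}|,\ \max_{r\in\mathcal{R}}|\{g\in\mathcal{G}: g\subseteq r\}|\big)+1$. $\mathcal{E}$ is the set of all multisets $e$ of exactly $k$ subregions (repetitions allowed) such that no $r\in\mathcal{R}$ satisfies $g\subseteq r$ for all $g\in e$. For $\mathcal{S}\subseteq\mathcal{T}\times\mathcal{O}$ let $\mathcal{V}(\mathcal{S})=\{h: h(t)=o\ \forall (t,o)\in\mathcal{S}\}$. Define $f_{\mathrm{HEC}}(\mathcal{S})=\sum_{e\in\mathcal{E}}\prod_{g\in e}P(g)-\sum_{e\in\mathcal{E}}\prod_{g\in e}P(g\cap\mathcal{V}(\mathcal{S}))$, where $P(A)=\sum_{h\in A}P(h)$ and products over a multiset count multiplicities. The expected marginal gain of test $t$ given $\mathcal{S}$ with $P(\mathcal{V}(\mathcal{S}))>0$ is $\Delta(t\mid\mathcal{S})=\sum_{h\in\mathcal{V}(\mathcal{S})}\frac{P(h)}{P(\mathcal{V}(\mathcal{S}))}\big(f_{\mathrm{HEC}}(\mathcal{S}\cup\{(t,h(t))\})-f_{\mathrm{HEC}}(\mathcal{S})\big)$. *)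

From HB Require Import structures.
From mathcomp Require Import all_boot all_order all_algebra.
Set Implicit Arguments. Unset Strict Implicit. Unset Printing Implicit Defensive.
Import Order.TTheory GRing.Theory Num.Theory.
Local Open Scope ring_scope.

(* Hypotheses are elements of a finite type H; [ev h t] is the outcome h(t).
   Prior: P : H -> R.  Decision regions: rs : {set {set H}}. *)

Definition probA (R : numDomainType) (H : finType) (P : H -> R) (A : {set H}) : R :=
  \sum_(h in A) P h.

Definition subregion_of (H : finType) (rs : {set {set H}}) (h : H) : {set H} :=
  [set h' | [forall r in rs, (h' \in r) == (h \in r)]].

Definition subregions (H : finType) (rs : {set {set H}}) : {set {set H}} :=
  [set subregion_of rs h | h : H].

Definition hec_k (H : finType) (rs : {set {set H}}) : nat :=
  (minn (\max_(h : H) #|[set r in rs | h \in r]|)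
        (\max_(r in rs) #|[set g in subregions rs | g \subset r]|)).+1.

(* A multiset of subregions is represented by its multiplicity function m
   (multiplicity of g is m g). *)
Definition is_hyperedge (H : finType) (rs : {set {set H}})
    (m : {ffun {set H} -> 'I_(hec_k rs).+1}) : bool :=
  [&& [forall g, (0 < m g)%N ==> (g \in subregions rs)],
      (\sum_(g : {set H}) (m g : nat) == hec_k rs)%N &
      ~~ [exists r in rs, [forall g, (0 < m g)%N ==> (g \subset r)]]].

Definition edge_sum (R : numDomainType) (H : finType) (rs : {set {set H}})
    (w : {set H} -> R) : R :=
  \sum_(m : {ffun {set H} -> 'I_(hec_k rs).+1} | is_hyperedge m)
     \prod_(g : {set H}) w g ^+ (m g : nat).

Definition version_space (H T O : finType) (ev : H -> T -> O)
    (S : {set T * O}) : {set H} :=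
  [set h | [forall to in S, ev h to.1 == to.2]].

Definition f_HEC (R : numDomainType) (H T O : finType) (ev : H -> T -> O)
    (P : H -> R) (rs : {set {set H}}) (S : {set T * O}) : R :=
  edge_sum rs (fun g => probA P g)
  - edge_sum rs (fun g => probA P (g :&: version_space ev S)).

Definition hec_gain (R : numFieldType) (H T O : finType) (ev : H -> T -> O)
    (P : H -> R) (rs : {set {set H}}) (t : T) (S : {set T * O}) : R :=
  \sum_(h in version_space ev S)
     (P h / probA P (version_space ev S)) *
     (f_HEC ev P rs (S :|: [set (t, ev h t)]) - f_HEC ev P rs S).

From mathcomp Require Import all_boot all_order all_algebra.
From mathcomp Require Import ring lra zify.
Import Order.TTheory GRing.Theory Num.Theory.
Local Open Scope ring_scope.
Set Implicit Arguments. Unset Strict Implicit. Unset Printing Implicit Defensive.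

(* Write F(B) ([edge_mass B]) for the hyperedge polynomial evaluated at the
   masses P(g ∩ B) of the subregions, so that f_HEC(S) = F(H) - F(V(S)) and
   Δ(t | S) only depends on B = V(S).  Part (i) is the monotonicity of F.  For
   (ii) it suffices that the expected gain over B does not decrease when one
   hypothesis h0 is added to B.  Splitting B into the hypotheses Y that agree
   with h0 on t and the rest, the gain is F(B) - (P(Y) F(Y) + K) / P(B), where
   K does not change when h0 is added; the claim then follows from two
   properties of F: it has increasing differences (it is a polynomial with
   nonnegative coefficients), and adding mass d to one subregion raises F(Y)
   by at least d F(Y) / P(Y).  The latter is a double counting resting on an
   exchange property of hyperedges: by the choice of k, any subregion can
   replace some member of any hyperedge so that the result is again a
   hyperedge. *)

(* [v, u] and [V, U] are values before and after an increment; products of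
   nonnegative quantities with nonnegative increments that grow with the base
   point keep this property. *)
Lemma mul_increment_le (R : realDomainType) (u v u' v' U V U' V' : R) :
  0 <= v -> v <= u -> 0 <= V -> V <= U -> v <= v' -> u - v <= u' - v' ->
  V <= V' -> U - V <= U' - V' ->
  0 <= u * U - v * V /\ u * U - v * V <= u' * U' - v' * V'.
Proof.
move=> *; split; first nra.
have -> : u * U - v * V = (u - v) * U + v * (U - V) by ring.
have -> : u' * U' - v' * V' = (u' - v') * U' + v' * (U' - V') by ring.
by apply: lerD; apply: ler_pM; lra.
Qed.

Lemma expr_increment_le (R : realDomainType) (x x' c : R) n :
  0 <= x -> x <= x' -> 0 <= c ->
  0 <= (x + c) ^+ n - x ^+ n /\ (x + c) ^+ n - x ^+ n <= (x' + c) ^+ n - x' ^+ n.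
Proof.
move=> x0 xx' c0; elim: n => [|n [IH1 IH2]]; first by rewrite !expr0 subrr.
rewrite !exprS; apply: mul_increment_le => //; try lra.
- exact: exprn_ge0.
- by apply: lerXn2r => //; rewrite nnegrE; lra.
Qed.

Section Monomials.
Variables (R : realDomainType) (I : finType) (K : nat).
Implicit Types (w y : I -> R) (m : {ffun I -> 'I_K}).

Definition monomial w m := \prod_i w i ^+ m i.

(* [monomial w m / w g] when [m g > 0] *)
Definition monomial_quot g w m := \prod_i w i ^+ (m i - (i == g))%N.

Lemma monomial_ge0 w m : (forall i, 0 <= w i) -> 0 <= monomial w m.
Proof. by move=> w0; apply: prodr_ge0 => i _; apply: exprn_ge0. Qed.

Lemma monomial_quot_ge0 g w m : (forall i, 0 <= w i) -> 0 <= monomial_quot g w m.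
Proof. by move=> w0; apply: prodr_ge0 => i _; apply: exprn_ge0. Qed.

Lemma ler_monomial w w' m :
  (forall i, 0 <= w i <= w' i) -> monomial w m <= monomial w' m.
Proof.
move=> ww'; apply: ler_prod => i _; have /andP [w0 wle] := ww' i.
by rewrite exprn_ge0 //= lerXn2r // nnegrE (le_trans w0).
Qed.

Lemma monomial_increment_le (a a' c : I -> R) m :
  (forall i, 0 <= a i <= a' i) -> (forall i, 0 <= c i) ->
  monomial (fun i => a i + c i) m - monomial a m <=
  monomial (fun i => a' i + c i) m - monomial a' m.
Proof.
move=> aa' c0; rewrite /monomial.
suff /(_ (index_enum I)) [] : forall r : seq I,
  0 <= \prod_(i <- r) (a i + c i) ^+ m i - \prod_(i <- r) a i ^+ m i /\
  \prod_(i <- r) (a i + c i) ^+ m i - \prod_(i <- r) a i ^+ m i <=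
  \prod_(i <- r) (a' i + c i) ^+ m i - \prod_(i <- r) a' i ^+ m i by [].
have a0 j : 0 <= a j by case/andP: (aa' j).
elim => [|i r [IH1 IH2]]; first by rewrite !big_nil subrr.
rewrite !big_cons; have /andP [ai0 ai] := aa' i.
have [p1 p2] := expr_increment_le (m i) ai0 ai (c0 i).
apply: mul_increment_le => //.
- exact: exprn_ge0.
- by rewrite -subr_ge0.
- by apply: prodr_ge0 => j _; apply: exprn_ge0.
- by rewrite -subr_ge0.
- by apply: lerXn2r => //; rewrite nnegrE (le_trans ai0).
- by apply: ler_prod => j _; have /andP [aj0 aj] := aa' j;
    rewrite exprn_ge0 //= lerXn2r // nnegrE (le_trans aj0).
Qed.

Lemma monomial_increment_ge y y' g (d : R) m :
  (forall i, 0 <= y i <= y' i) -> y g + d <= y' g -> 0 <= d -> (0 < m g)%N ->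
  d * monomial_quot g y m <= monomial y' m - monomial y m.
Proof.
move=> yy' yg d0 mg.
have splitg (w : I -> R) (e : I -> nat) :
    \prod_i w i ^+ e i = w g ^+ e g * \prod_(i | i != g) w i ^+ e i.
  by rewrite (bigD1 g).
rewrite /monomial /monomial_quot (splitg y' (fun i => m i)) (splitg y (fun i => m i)).
rewrite (splitg y (fun i => m i - (i == g))%N) /= eqxx.
have -> : \prod_(i | i != g) y i ^+ (m i - (i == g))%N = \prod_(i | i != g) y i ^+ m i.
  by apply: eq_bigr => i /negbTE ->; rewrite subn0.
set R0 := \prod_(i | i != g) y i ^+ m i.
set R1 := \prod_(i | i != g) y' i ^+ m i.
have R0_ge0 : 0 <= R0 by apply: prodr_ge0 => i _; apply: exprn_ge0; case/andP: (yy' i).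
have R01 : R0 <= R1.
  apply: ler_prod => i _; have /andP [yi0 yi] := yy' i.
  by rewrite exprn_ge0 //= lerXn2r // nnegrE (le_trans yi0).
have /andP [yg0 _] := yy' g.
move: mg; case: (m g) => /= -[//|n] _ _; rewrite subSS subn0.
have h1 : (y g + d) ^+ n.+1 <= y' g ^+ n.+1 by apply: lerXn2r; rewrite ?nnegrE; lra.
have h2 : y g ^+ n.+1 + d * y g ^+ n <= (y g + d) ^+ n.+1.
  rewrite !exprS -mulrDl; apply: ler_wpM2l; first lra.
  by apply: lerXn2r; rewrite ?nnegrE; lra.
have h3 : y' g ^+ n.+1 * R0 <= y' g ^+ n.+1 * R1.
  by apply: ler_wpM2l => //; apply: exprn_ge0; lra.
have h4 : d * y g ^+ n * R0 <= (y' g ^+ n.+1 - y g ^+ n.+1) * R0.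
  by apply: ler_wpM2r => //; lra.
rewrite mulrBl in h4; rewrite mulrA; lra.
Qed.

End Monomials.

Lemma leq_term_sum (I : finType) (f : I -> nat) i : (f i <= \sum_j f j)%N.
Proof. by rewrite (bigD1 i) //= leq_addr. Qed.

Lemma leq_two_terms_sum (I : finType) (f : I -> nat) i j :
  i != j -> (f i + f j <= \sum_l f l)%N.
Proof.
move=> ij; rewrite (bigD1 i) //= (bigD1 j) /=; last by rewrite eq_sym.
by rewrite addnA leq_addr.
Qed.

Lemma sum_eq1 (I : finType) (g : I) : (\sum_i ((i == g) : nat))%N = 1%N.
Proof. by rewrite (bigD1 g) //= eqxx big1 // => i /negbTE ->. Qed.

Section Transfer.
Variables (I : finType) (K : nat).
Implicit Types (m : {ffun I -> 'I_K.+1}) (g h : I).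

(* Moves one unit of multiplicity from [h] to [g].  Because of [inord] this is
   exact (see [transferE]) only when [m h > 0] and the total multiplicity is at
   most [K]. *)
Definition transfer h g m : {ffun I -> 'I_K.+1} :=
  [ffun i => inord (m i + (i == g) - (i == h))%N].

Section Bounded.
Variables (m : {ffun I -> 'I_K.+1}) (h : I).
Hypotheses (mh : (0 < m h)%N) (m_le : (\sum_i (m i : nat) <= K)%N).

Lemma transferE g i : (transfer h g m i : nat) = (m i + (i == g) - (i == h))%N.
Proof.
rewrite ffunE inordK //; have := leq_term_sum (fun i => (m i : nat)) i.
case: (eqVneq i g) => [->|ig] /= mi; last by case: (i == h) => /=; lia.
case: (eqVneq g h) => [gh|gh]; first by rewrite ?eqxx /=; lia.
by have := leq_two_terms_sum (fun i => (m i : nat)) gh; rewrite /=; lia.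
Qed.

Lemma sum_transfer g : (\sum_i (transfer h g m i : nat))%N = (\sum_i (m i : nat))%N.
Proof.
apply/eqP; rewrite -(eqn_add2r 1) -{1}(sum_eq1 h) -(sum_eq1 g) -!big_split /=.
apply/eqP/eq_bigr => i _; rewrite transferE.
by case: (eqVneq i h) => [->|] /=; lia.
Qed.

Lemma transferK g : transfer g h (transfer h g m) = m.
Proof.
apply/ffunP => i; apply/val_inj; rewrite ffunE /= transferE inordK.
  by case: (i == g); case: (eqVneq i h) => [->|] /=; lia.
have := ltn_ord (m i); have := leq_term_sum (fun i => (m i : nat)) i.
by case: (i == g); case: (eqVneq i h) => [->|] /=; lia.
Qed.

Lemma monomial_transfer (R : realDomainType) (y : I -> R) g :
  monomial y m = y h * monomial_quot g y (transfer h g m).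
Proof.
rewrite /monomial /monomial_quot.
have -> : \prod_i y i ^+ (transfer h g m i - (i == g))%N =
          \prod_i y i ^+ (m i - (i == h))%N.
  apply: eq_bigr => i _; rewrite transferE; congr (_ ^+ _).
  by case: (i == g); case: (eqVneq i h) => [->|] /=; lia.
rewrite (bigD1 h) //= [X in _ = _ * X](bigD1 h) //= eqxx.
have -> : \prod_(i | i != h) y i ^+ (m i - (i == h))%N = \prod_(i | i != h) y i ^+ m i.
  by apply: eq_bigr => i /negbTE ->; rewrite subn0.
by move: mh; case: (m h : nat) => // n _; rewrite subSS subn0 exprS mulrA.
Qed.

End Bounded.

Lemma transfer_id g m : transfer g g m = m.
Proof. by apply/ffunP => i; rewrite ffunE addnK inord_val. Qed.

End Transfer.

Lemma subregion_self (H : finType) (rs : {set {set H}}) h : h \in subregion_of rs h.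
Proof. by rewrite inE; apply/forall_inP. Qed.

Lemma subregion_ofE (H : finType) (rs : {set {set H}}) h x :
  h \in subregion_of rs x -> subregion_of rs h = subregion_of rs x.
Proof.
rewrite inE => /forall_inP hx; apply/setP => z; rewrite !inE.
by apply: eq_forallb_in => r r_in; rewrite (eqP (hx r r_in)).
Qed.

Lemma in_subregions (H : finType) (rs : {set {set H}}) h g :
  (g \in subregions rs) && (h \in g) = (g == subregion_of rs h).
Proof.
apply/andP/eqP => [[/imsetP [x _ ->] /subregion_ofE -> //]|->].
by rewrite subregion_self imset_f.
Qed.

Section Exchange.
Variables (H : finType) (rs : {set {set H}}).
Local Notation k := (hec_k rs).
Implicit Types (m : {ffun {set H} -> 'I_k.+1}) (g h r : {set H}).

Definition covers r m := [forall i, (0 < m i)%N ==> (i \subset r)].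

Lemma hyperedge_sum m : is_hyperedge m -> (\sum_i (m i : nat) <= k)%N.
Proof. by case/and3P => _ /eqP ->. Qed.

Lemma is_hyperedge_transfer m h g :
  is_hyperedge m -> (0 < m h)%N -> g \in subregions rs ->
  is_hyperedge (transfer h g m) = ~~ [exists r in rs, covers r (transfer h g m)].
Proof.
move=> m_edge mh g_sub; have /and3P [m_supp m_sum _] := m_edge.
rewrite /is_hyperedge sum_transfer ?hyperedge_sum // m_sum /=.
suff -> : [forall i, (0 < transfer h g m i)%N ==> (i \in subregions rs)] by [].
apply/forallP => i; apply/implyP; rewrite transferE ?hyperedge_sum //.
case: (eqVneq i g) => [-> //|ig] /=; rewrite addn0 => mi.
by apply: (implyP (forallP m_supp i)); move: mi; case: (i == h) => /=; lia.
Qed.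

(* A hyperedge [m] missing the subregion [g] such that every exchange of one of
   its members for [g] is covered by a region cannot exist: the covering regions
   are pairwise distinct and all contain [g], which bounds [k] by the first term
   of the minimum, and any one of them contains [k] subregions, which bounds [k]
   by the second. *)
Section Blocked.
Variables (m : {ffun {set H} -> 'I_k.+1}) (g : {set H}).
Hypotheses (m_edge : is_hyperedge m) (g_sub : g \in subregions rs)
  (mg0 : (m g : nat) = 0%N)
  (blocked : forall h, (0 < m h)%N -> [exists r in rs, covers r (transfer h g m)]).

Let m_le := hyperedge_sum m_edge.
Let supp := [set i | (0 < m i)%N].

Lemma covers_transfer_target h r :
  (0 < m h)%N -> covers r (transfer h g m) -> g \subset r.
Proof.
move=> mh /forallP /(_ g) /implyP; apply; rewrite transferE // eqxx.
suff -> : (g == h) = false by rewrite mg0.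
by apply/negbTE/eqP => gh; move: mh; rewrite -gh mg0.
Qed.

Lemma covers_transfer_others h r i :
  (0 < m h)%N -> covers r (transfer h g m) -> (0 < m i)%N -> i != h -> i \subset r.
Proof.
move=> mh /forallP /(_ i) /implyP r_cov mi ih; apply: r_cov; rewrite transferE //.
have -> : (i == g) = false by apply/negbTE/eqP => ig; move: mi; rewrite ig mg0.
by rewrite (negbTE ih) addn0 subn0.
Qed.

Lemma blocked_mult1 h : (0 < m h)%N -> (m h : nat) = 1%N.
Proof.
move=> mh; suff : (m h <= 1)%N by lia.
rewrite leqNgt; apply/negP => m2; have /exists_inP [r r_in r_cov] := blocked mh.
have /and3P [_ _ /negP] := m_edge; apply; apply/exists_inP; exists r => //.
apply/forallP => i; apply/implyP => mi.
case: (eqVneq i h) => [->|ih]; last exact: covers_transfer_others r_cov mi ih.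
move/forallP: r_cov => /(_ h) /implyP; apply; rewrite transferE // eqxx.
by case: (h == g) => /=; lia.
Qed.

Lemma card_supp : #|supp| = k.
Proof.
have /and3P [_ /eqP m_sum _] := m_edge.
rewrite -[RHS]m_sum -sum1_card big_mkcond /=; apply: eq_bigr => i _; rewrite inE.
by case: (boolP (0 < m i)%N) => [/blocked_mult1 ->|]; case: (m i : nat).
Qed.

Definition blocking_region h := odflt set0 [pick r in rs | covers r (transfer h g m)].

Lemma blocking_regionP h : h \in supp ->
  (blocking_region h \in rs) && covers (blocking_region h) (transfer h g m).
Proof.
rewrite inE /blocking_region => mh; case: pickP => [r /andP [-> ->] //|none].
have /exists_inP [r r_in r_cov] := blocked mh.
by have := none r; rewrite r_in r_cov.
Qed.

(* If two members shared a blocking region, that region would cover [m] itself. *)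
Lemma blocking_region_inj : {in supp &, injective blocking_region}.
Proof.
move=> h1 h2 s1 s2 r12; apply/eqP/negP => /negP h12.
have /andP [r1_in r1_cov] := blocking_regionP s1.
have /andP [_ r2_cov] := blocking_regionP s2.
move: (s1) (s2); rewrite !inE => m1 m2.
have /and3P [_ _ /negP] := m_edge; apply; apply/exists_inP.
exists (blocking_region h1); first exact: r1_in.
apply/forallP => i; apply/implyP => mi.
case: (eqVneq i h1) => [ih|ih]; last exact: covers_transfer_others r1_cov mi ih.
by rewrite r12; apply: covers_transfer_others r2_cov mi _; rewrite ?ih.
Qed.

Lemma blocked_false : False.
Proof.
have [x0 _ g_def] := imsetP g_sub.
have k_le_regions : (k <= #|[set r in rs | x0 \in r]|)%N.
  rewrite -card_supp -(card_in_imset blocking_region_inj); apply: subset_leq_card.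
  apply/subsetP => r /imsetP [h hs ->]; have /andP [r_in r_cov] := blocking_regionP hs.
  rewrite inE r_in; apply: (subsetP (covers_transfer_target _ r_cov)).
    by move: hs; rewrite inE.
  by rewrite g_def subregion_self.
have [h1 h1s] : exists h1, h1 \in supp.
  by apply/set0Pn; apply/eqP => e; move: card_supp; rewrite e cards0 /hec_k.
have /andP [r1_in r1_cov] := blocking_regionP h1s.
have mh1 : (0 < m h1)%N by move: h1s; rewrite inE.
have k_le_subregions :
    (k <= #|[set g' in subregions rs | g' \subset blocking_region h1]|)%N.
  have g_notin : g \notin supp :\ h1 by rewrite !inE mg0 andbF.
  have <- : #|g |: (supp :\ h1)| = k.
    by rewrite cardsU1 g_notin -card_supp (cardsD1 h1 supp) h1s.
  apply: subset_leq_card; apply/subsetP => i; rewrite !inE.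
  case/orP => [/eqP -> | /andP [ih mi]].
    by rewrite g_sub (covers_transfer_target mh1 r1_cov).
  rewrite (covers_transfer_others mh1 r1_cov mi ih) andbT.
  by have /and3P [/forallP /(_ i) /implyP /(_ mi)] := m_edge.
have := @leq_bigmax _ (fun x => #|[set r in rs | x \in r]|) x0.
have := @leq_bigmax_cond _ _ (fun r => #|[set g' in subregions rs | g' \subset r]|) _ r1_in.
move: k_le_regions k_le_subregions; rewrite /hec_k.
by set a := \max_h _; set b := \max_(r in rs) _; lia.
Qed.

End Blocked.

Lemma hyperedge_exchange m g : is_hyperedge m -> g \in subregions rs ->
  exists2 h, (0 < m h)%N & is_hyperedge (transfer h g m).
Proof.
move=> m_edge g_sub.
have [mg|mg] := boolP (0 < m g)%N; first by exists g; rewrite ?transfer_id.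
have [/existsP [h /andP [mh h_free]]|] :=
  boolP [exists h, (0 < m h)%N && ~~ [exists r in rs, covers r (transfer h g m)]].
  by exists h; rewrite // is_hyperedge_transfer.
rewrite negb_exists => /forallP none; exfalso.
apply: (blocked_false m_edge g_sub) => [|h mh]; first by move: mg; case: (m g : nat).
by have := none h; rewrite mh negbK.
Qed.

End Exchange.

Lemma ler_sum_subset (R : realDomainType) (I : finType) (P Q : pred I) (F : I -> R) :
  {subset P <= Q} -> (forall i, Q i -> 0 <= F i) ->
  \sum_(i | P i) F i <= \sum_(i | Q i) F i.
Proof.
move=> PQ F0; rewrite [X in _ <= X](bigID P) /=.
have -> : \sum_(i | Q i && P i) F i = \sum_(i | P i) F i.
  by apply: eq_bigl => i; case: (boolP (P i)) => [/PQ|]; rewrite ?andbF ?andbT.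
by apply: ler_wpDr => //; apply: sumr_ge0 => i /andP [/F0].
Qed.

Section EdgeSums.
Variables (R : realDomainType) (H : finType) (rs : {set {set H}}).
Local Notation k := (hec_k rs).
Implicit Types (w y : {set H} -> R) (g : {set H}).

Lemma edge_sum_ge0 w : (forall i, 0 <= w i) -> 0 <= edge_sum rs w.
Proof. by move=> w0; apply: sumr_ge0 => m _; apply: monomial_ge0. Qed.

Lemma ler_edge_sum w w' :
  (forall i, 0 <= w i <= w' i) -> edge_sum rs w <= edge_sum rs w'.
Proof. by move=> ww'; apply: ler_sum => m _; apply: ler_monomial. Qed.

Lemma eq_edge_sum w w' : w =1 w' -> edge_sum rs w = edge_sum rs w'.
Proof. by move=> ww'; apply: eq_bigr => m _; apply: eq_bigr => i _; rewrite ww'. Qed.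

Lemma edge_sum_increment_le (a a' c : {set H} -> R) :
  (forall i, 0 <= a i <= a' i) -> (forall i, 0 <= c i) ->
  edge_sum rs (fun i => a i + c i) - edge_sum rs a <=
  edge_sum rs (fun i => a' i + c i) - edge_sum rs a'.
Proof.
move=> aa' c0; rewrite /edge_sum -!sumrB; apply: ler_sum => m _.
exact: monomial_increment_le.
Qed.

(* The partial derivative of [edge_sum rs y] in the variable [y g], up to the
   multiplicities. *)
Definition edge_sum_quot g y : R :=
  \sum_(m : {ffun {set H} -> 'I_k.+1} | is_hyperedge m && (0 < m g)%N)
    monomial_quot g y m.

Lemma edge_sum_quot_ge0 g y : (forall i, 0 <= y i) -> 0 <= edge_sum_quot g y.
Proof. by move=> y0; apply: sumr_ge0 => m _; apply: monomial_quot_ge0. Qed.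

Lemma edge_sum_increment_ge y y' g (d : R) :
  (forall i, 0 <= y i <= y' i) -> y g + d <= y' g -> 0 <= d ->
  d * edge_sum_quot g y <= edge_sum rs y' - edge_sum rs y.
Proof.
move=> yy' yg d0; rewrite /edge_sum /edge_sum_quot -sumrB big_mkcondr mulr_sumr.
apply: ler_sum => m _; case: ifP => mg; first exact: monomial_increment_ge.
by rewrite mulr0 subr_ge0 ler_monomial.
Qed.

(* Double counting through [hyperedge_exchange]: each monomial [y h * q] of
   [edge_sum rs y] is matched with the monomial [q] of [edge_sum_quot g y]. *)
Lemma edge_sum_le_quot y g : (forall i, 0 <= y i) -> g \in subregions rs ->
  edge_sum rs y <= (\sum_(i in subregions rs) y i) * edge_sum_quot g y.
Proof.
move=> y0 g_sub; rewrite mulr_suml.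
pose exchangeable (m : {ffun {set H} -> 'I_k.+1}) h :=
  [&& h \in subregions rs, (0 < m h)%N & is_hyperedge (transfer h g m)].
apply: (@le_trans _ _ (\sum_(m | is_hyperedge m) \sum_(h | exchangeable m h) monomial y m)).
  apply: ler_sum => m m_edge; have [h mh h_edge] := hyperedge_exchange m_edge g_sub.
  have h_sub : h \in subregions rs by have /and3P [/forallP /(_ h) /implyP /(_ mh)] := m_edge.
  rewrite [X in _ <= X](bigD1 h) /=; last exact/and3P.
  by apply: ler_wpDr => //; apply: sumr_ge0 => h' _; apply: monomial_ge0.
rewrite (exchange_big_dep (mem (subregions rs))) /=; last by move=> m h _ /andP [].
apply: ler_sum => h h_sub.
rewrite (eq_bigr (fun m => y h * monomial_quot g y (transfer h g m))); last first.
  move=> m /andP [m_edge /and3P [_ mh _]].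
  by rewrite (monomial_transfer mh _ _ g) ?hyperedge_sum.
rewrite -mulr_sumr; apply: ler_wpM2l => //.
pose A := [set m | is_hyperedge m && exchangeable m h].
rewrite (eq_bigl (mem A)); last by move=> m; rewrite [RHS]inE.
rewrite -big_imset /=; last first.
  move=> m1 m2; rewrite !inE => /and4P [m1_edge _ mh1 _] /and4P [m2_edge _ mh2 _] e.
  by rewrite -(transferK mh1 (hyperedge_sum m1_edge) g) e transferK // hyperedge_sum.
apply: ler_sum_subset => [m' | m' _]; last exact: monomial_quot_ge0.
case/imsetP => m; rewrite inE => /and4P [m_edge _ mh h_edge] ->.
rewrite unfold_in /= h_edge /= transferE ?hyperedge_sum // eqxx.
by move: mh; case: (eqVneq g h) => [->|] /=; lia.
Qed.

Lemma edge_sum_increment_mass y y' g (d : R) :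
  (forall i, 0 <= y i <= y' i) -> y g + d <= y' g -> 0 <= d -> g \in subregions rs ->
  edge_sum rs y * d <= (\sum_(i in subregions rs) y i) * (edge_sum rs y' - edge_sum rs y).
Proof.
move=> yy' yg d0 g_sub; have y0 i : 0 <= y i by case/andP: (yy' i).
have q0 := edge_sum_quot_ge0 g y0.
have mass0 : 0 <= \sum_(i in subregions rs) y i by apply: sumr_ge0.
apply: le_trans (_ : (\sum_(i in subregions rs) y i) * edge_sum_quot g y * d <= _).
  by apply: ler_wpM2r => //; apply: edge_sum_le_quot.
by rewrite -mulrA [_ * d]mulrC; apply: ler_wpM2l => //; apply: edge_sum_increment_ge.
Qed.

End EdgeSums.

Lemma gain_update_le (R : realFieldType) (FB FY FB' FY' pY pZ d K : R) :
  0 <= pY -> 0 <= pZ -> 0 <= d -> 0 <= K -> 0 < pY + pZ -> 0 <= FY -> FY <= FY' ->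
  FB - FY <= FB' - FY' -> FY * d <= pY * (FY' - FY) ->
  FB - (pY * FY + K) / (pY + pZ) <= FB' - ((pY + d) * FY' + K) / (pY + d + pZ).
Proof.
move=> pY0 pZ0 d0 K0 pYZ FY0 FYY' FBY FYd.
have pYdZ : 0 < pY + d + pZ by lra.
have -> : FB - (pY * FY + K) / (pY + pZ) =
    (FB - FY) + pZ * (FY / (pY + pZ)) - K / (pY + pZ) by field; rewrite gt_eqF.
have -> : FB' - ((pY + d) * FY' + K) / (pY + d + pZ) =
    (FB' - FY') + pZ * (FY' / (pY + d + pZ)) - K / (pY + d + pZ) by field; rewrite gt_eqF.
have ratio_le : FY / (pY + pZ) <= FY' / (pY + d + pZ).
  rewrite ler_pdivrMr // mulrAC ler_pdivlMr //.
  have : FY * d <= (pY + pZ) * (FY' - FY) by apply: le_trans FYd _; apply: ler_wpM2r; lra.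
  by rewrite !mulrDr !mulrDl ?mulrN ?mulNr; lra.
have K_le : K / (pY + d + pZ) <= K / (pY + pZ).
  by rewrite ler_pdivrMr // mulrAC ler_pdivlMr //; apply: ler_wpM2l => //; lra.
have : pZ * (FY / (pY + pZ)) <= pZ * (FY' / (pY + d + pZ)) by apply: ler_wpM2l.
lra.
Qed.

Lemma le_setU1_subset (T : finType) (R : numDomainType) (f : {set T} -> R) :
  (forall x (A : {set T}), x \notin A -> f A <= f (x |: A)) ->
  {homo f : A B / A \subset B >-> A <= B}.
Proof.
move=> f_setU1 A B; move: {2}#|B :\: A| (erefl #|B :\: A|) => n.
elim: n A => [|n IH] A BA_card AB.
  have /eqP : B :\: A = set0 by apply/eqP; rewrite -cards_eq0 BA_card.
  by rewrite setD_eq0 => BA; rewrite (_ : A = B) // ; apply/eqP; rewrite eqEsubset AB.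
have [x xBA] : exists x, x \in B :\: A.
  by apply/set0Pn; apply/eqP => BA0; move: BA_card; rewrite BA0 cards0.
move: (xBA); rewrite inE => /andP [xA xB].
have xAB : x |: A \subset B by rewrite subUset sub1set xB.
have xBA_card : #|B :\: (x |: A)| = n.
  have -> : B :\: (x |: A) = (B :\: A) :\ x by apply/setP => z; rewrite !inE negb_or andbA.
  by move: BA_card; rewrite (cardsD1 x) xBA => -[].
exact: le_trans (f_setU1 _ _ xA) (IH _ xBA_card xAB).
Qed.

Section Gain.
Variables (R : realFieldType) (H T O : finType) (ev : H -> T -> O) (P : H -> R).
Variables (rs : {set {set H}}).
Hypothesis P_ge0 : forall h, 0 <= P h.
Implicit Types (A B Y g : {set H}) (S : {set T * O}).

Lemma probA_ge0 A : 0 <= probA P A.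
Proof. exact: sumr_ge0. Qed.

Lemma probA_subset A B : A \subset B -> probA P A <= probA P B.
Proof. by move=> /subsetP AB; apply: ler_sum_subset. Qed.

Lemma probA_setU1 h A : h \notin A -> probA P (h |: A) = P h + probA P A.
Proof. exact: big_setU1. Qed.

Lemma probA_setID A C : probA P A = probA P (A :&: C) + probA P (A :\: C).
Proof. exact: big_setID. Qed.

Definition mass_on B g := probA P (g :&: B).

Definition edge_mass B := edge_sum rs (mass_on B).

Lemma mass_on_le A B : A \subset B -> forall g, 0 <= mass_on A g <= mass_on B g.
Proof. by move=> AB g; rewrite probA_ge0 probA_subset // setIS. Qed.

Lemma edge_mass_ge0 B : 0 <= edge_mass B.
Proof. by apply: edge_sum_ge0 => g; apply: probA_ge0. Qed.

Lemma le_edge_mass A B : A \subset B -> edge_mass A <= edge_mass B.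
Proof. by move=> AB; apply/ler_edge_sum/mass_on_le. Qed.

Lemma sum_mass_on B : \sum_(g in subregions rs) mass_on B g = probA P B.
Proof.
rewrite /mass_on /probA (exchange_big_dep (mem B)) /=; last first.
  by move=> g h _; rewrite inE => /andP [].
apply: eq_bigr => h hB; rewrite (big_pred1 (subregion_of rs h)) // => g /=.
by rewrite inE hB andbT in_subregions.
Qed.

Lemma edge_mass_supermodular A A' C :
  A :&: C \subset A' :&: C -> A :\: C = A' :\: C ->
  edge_mass A - edge_mass (A :&: C) <= edge_mass A' - edge_mass (A' :&: C).
Proof.
move=> AA' A'A; have splitC B g : mass_on B g = mass_on (B :&: C) g + mass_on (B :\: C) g.
  by rewrite /mass_on (probA_setID _ C) setIA setIDA.
rewrite /edge_mass (eq_edge_sum _ (splitC A)) (eq_edge_sum _ (splitC A')) A'A.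
by apply: edge_sum_increment_le (mass_on_le AA') _ => g; apply: probA_ge0.
Qed.

Lemma edge_mass_setU1 Y h : h \notin Y ->
  edge_mass Y * P h <= probA P Y * (edge_mass (h |: Y) - edge_mass Y).
Proof.
move=> hY; rewrite -sum_mass_on.
apply: (edge_sum_increment_mass (g := subregion_of rs h)) => //.
- exact/mass_on_le/subsetUr.
- have hg : [set h] \subset subregion_of rs h by rewrite sub1set subregion_self.
  rewrite /mass_on setIUr (setIidPr hg) probA_setU1 1?addrC //.
  by rewrite inE (negbTE hY) andbF.
- exact: imset_f.
Qed.

Definition outcome_class t o := [set x | ev x t == o].

Lemma version_space_subset S S' :
  S \subset S' -> version_space ev S' \subset version_space ev S.
Proof.
move=> SS'; apply/subsetP => x; rewrite !inE => /forall_inP x_cons.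
by apply/forall_inP => to /(subsetP SS'); apply: x_cons.
Qed.

Lemma version_space_setU1 S t o :
  version_space ev (S :|: [set (t, o)]) = version_space ev S :&: outcome_class t o.
Proof.
apply/setP => x; rewrite !inE; apply/forall_inP/andP => [x_cons|[/forall_inP x_cons xo]].
  split; first by apply/forall_inP => to toS; apply: x_cons; rewrite inE toS.
  by have := x_cons (t, o); rewrite !inE eqxx orbT => /(_ isT).
by move=> to; rewrite !inE => /orP [/x_cons //|/eqP ->].
Qed.

Lemma f_HEC_increment S t o :
  f_HEC ev P rs (S :|: [set (t, o)]) - f_HEC ev P rs S =
  edge_mass (version_space ev S) - edge_mass (version_space ev S :&: outcome_class t o).
Proof.
by rewrite /f_HEC version_space_setU1 /edge_mass /mass_on; ring.
Qed.

Definition gain t B :=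
  \sum_(h in B) (P h / probA P B) *
    (edge_mass B - edge_mass (B :&: outcome_class t (ev h t))).

Lemma hec_gainE S t : hec_gain ev P rs t S = gain t (version_space ev S).
Proof. by apply: eq_bigr => h _; rewrite f_HEC_increment. Qed.

Lemma gain_ge0 t B : 0 <= gain t B.
Proof.
apply: sumr_ge0 => h _; rewrite mulr_ge0 ?divr_ge0 ?probA_ge0 //.
by rewrite subr_ge0 le_edge_mass // subsetIl.
Qed.

Lemma gain_probA0 t B : probA P B = 0 -> gain t B = 0.
Proof. by move=> pB0; apply: big1 => h _; rewrite pB0 invr0 mulr0 mul0r. Qed.

Lemma gainE t B : probA P B != 0 ->
  gain t B = edge_mass B -
    (\sum_(h in B) P h * edge_mass (B :&: outcome_class t (ev h t))) / probA P B.
Proof.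
move=> pB_neq0; set F := fun h => edge_mass (B :&: outcome_class t (ev h t)).
have -> : gain t B = (\sum_(h in B) P h * (edge_mass B - F h)) / probA P B.
  by rewrite mulr_suml; apply: eq_bigr => h _; rewrite mulrAC.
rewrite (eq_bigr (fun h => P h * edge_mass B - P h * F h)); last first.
  by move=> h _; rewrite mulrBr.
by rewrite sumrB -mulr_suml -/(probA P B); field.
Qed.

(* Hypotheses of [B] sharing the outcome [o] of [t] all lead to the same version space. *)
Lemma sum_outcome_split t o B :
  \sum_(h in B) P h * edge_mass (B :&: outcome_class t (ev h t)) =
  probA P (B :&: outcome_class t o) * edge_mass (B :&: outcome_class t o) +
  \sum_(h in B :\: outcome_class t o) P h * edge_mass (B :&: outcome_class t (ev h t)).
Proof.
rewrite (big_setID (outcome_class t o)) /=; congr (_ + _).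
rewrite /probA mulr_suml; apply: eq_bigr => h.
by rewrite !inE => /andP [_ /eqP ->].
Qed.

Lemma gain_setU1 t B h0 : h0 \notin B -> gain t B <= gain t (h0 |: B).
Proof.
move=> h0B; have [pB0|pB_neq0] := eqVneq (probA P B) 0.
  by rewrite gain_probA0 // gain_ge0.
set C := outcome_class t (ev h0 t); set Y := B :&: C; set Z := B :\: C.
have h0C : h0 \in C by rewrite inE.
have h0Y : h0 \notin Y by rewrite inE (negbTE h0B).
have B'C : (h0 |: B) :&: C = h0 |: Y by rewrite setIUl (setIidPl _) ?sub1set.
have B'Z : (h0 |: B) :\: C = Z.
  by rewrite setDUl (_ : [set h0] :\: C = set0) ?set0U //; apply/eqP; rewrite setD_eq0 sub1set.
have pB : probA P B = probA P Y + probA P Z by apply: probA_setID.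
have pB' : probA P (h0 |: B) = probA P Y + P h0 + probA P Z.
  by rewrite probA_setU1 // pB addrA [P h0 + _]addrC.
have pY_ge0 := probA_ge0 Y; have pZ_ge0 := probA_ge0 Z.
have pYZ : 0 < probA P Y + probA P Z by rewrite -pB lt_def pB_neq0 probA_ge0.
have pB'_neq0 : probA P (h0 |: B) != 0 by rewrite pB' gt_eqF //; have := P_ge0 h0; lra.
set K := \sum_(h in Z) P h * edge_mass (B :&: outcome_class t (ev h t)).
have K' : \sum_(h in Z) P h * edge_mass ((h0 |: B) :&: outcome_class t (ev h t)) = K.
  apply: eq_bigr => h; rewrite !inE => /andP [hC _]; congr (_ * edge_mass _).
  rewrite setIUl (_ : [set h0] :&: _ = set0) ?set0U //; apply/setP => x; rewrite !inE.
  by apply/negbTE; apply: contraNN hC => /andP [/eqP -> /eqP ->].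
(* Only [Y] and its mass change when [h0] is added. *)
rewrite (gainE _ pB_neq0) (gainE _ pB'_neq0) !(sum_outcome_split t (ev h0 t)) -/C.
rewrite B'C B'Z K' pB pB' probA_setU1 // [P h0 + _]addrC.
apply: gain_update_le => //.
- by apply: sumr_ge0 => h _; rewrite mulr_ge0 ?edge_mass_ge0.
- exact: edge_mass_ge0.
- exact/le_edge_mass/subsetUr.
- by rewrite -B'C; apply: edge_mass_supermodular; rewrite ?B'Z // setSI // subsetUr.
- exact: edge_mass_setU1.
Qed.

Lemma le_gain t : {homo gain t : A B / A \subset B >-> A <= B}.
Proof. by apply: le_setU1_subset => h B; apply: gain_setU1. Qed.

End Gain.

Unset Implicit Arguments.
Theorem theorem2 (R : realFieldType) (H T O : finType) (ev : H -> T -> O)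
    (P : H -> R) (rs : {set {set H}})
    (P_ge0 : forall h, 0 <= P h)
    (P_sum1 : \sum_(h : H) P h = 1)
    (rs_cover : \bigcup_(r in rs) r = [set: H]) :
  (forall (S : {set T * O}) (t : T) (h : H),
      0 <= f_HEC ev P rs (S :|: [set (t, ev h t)]) - f_HEC ev P rs S) /\
  (forall (S S' : {set T * O}) (t : T),
      S \subset S' ->
      0 < probA P (version_space ev S') ->
      hec_gain ev P rs t S' <= hec_gain ev P rs t S).
Proof.
split=> [S t h | S S' t SS' _].
  by rewrite f_HEC_increment subr_ge0 le_edge_mass // subsetIl.
by rewrite !hec_gainE; apply/le_gain/version_space_subset.
Qed.
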